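(* For every fixed $r\in\mathbb{N}$, the theory $\mathcal{T}_r$ is pseudofinite, and the theory $\mathcal{T}_\infty$ is pseudofinite.
   Context: Work in the language of graphs $\{R\}$. Let $\mathrm{Gr}$ be the axioms of simple graphs ($R$ irreflexive and symmetric) and let $\tau_n$ ($n\geq 3$) be the sentence $\forall y_1,\dots,y_n\,\neg\big(\bigwedge_{i<j}y_i\neq y_j\wedge\bigwedge_{i=1}^{n-1}y_iRy_{i+1}\wedge y_nRy_1\big)$ (no cycle of length $n$). $\mathcal{T}_\infty$ is axiomatized by $\mathrm{Gr}$, all $\tau_n$ ($n\geq 3$), and for each $n<\omega$ the sentence $\sigma_n$: $\forall x\exists y_1,\dots,y_n(\bigwedge_{i<j}y_i\neq y_j\wedge\bigwedge_i xRy_i)$ (every vertex has infinite degree). $\mathcal{T}_r$ is axiomatized by $\mathrm{Gr}$, all $\tau_n$ ($n\geq 3$), and the sentence saying every vertex has exactly $r$ neighbours. (Both theories are complete.) A theory $T$ is pseudofinite if every sentence implied by $T$ has a finite model; equivalently, $T$ has a model elementarily equivalent to an ultraproduct of finite structures. *)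

From Stdlib Require Import List Arith.
Import ListNotations.

Inductive form : Type :=
| FRel : nat -> nat -> form
| FEq  : nat -> nat -> form
| FBot : form
| FImp : form -> form -> form
| FAnd : form -> form -> form
| FOr  : form -> form -> form
| FAll : nat -> form -> form
| FEx  : nat -> form -> form.

Definition FNot (p : form) : form := FImp p FBot.
Definition FTop : form := FImp FBot FBot.

Fixpoint fv (p : form) : list nat :=
  match p with
  | FRel i j | FEq i j => [i; j]
  | FBot => []
  | FImp p q | FAnd p q | FOr p q => fv p ++ fv q
  | FAll x p | FEx x p => remove Nat.eq_dec x (fv p)
  end.

Definition sentence (p : form) : Prop := fv p = [].

Record structure : Type := Structure {
  carrier :> Type;
  witness : carrier;
  rel : carrier -> carrier -> Prop }.

Definition upd {M : Type} (v : nat -> M) (x : nat) (d : M) : nat -> M :=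
  fun y => if Nat.eq_dec y x then d else v y.

Fixpoint sat (M : structure) (v : nat -> M) (p : form) : Prop :=
  match p with
  | FRel i j => rel M (v i) (v j)
  | FEq i j => v i = v j
  | FBot => False
  | FImp p q => sat M v p -> sat M v q
  | FAnd p q => sat M v p /\ sat M v q
  | FOr p q => sat M v p \/ sat M v q
  | FAll x p => forall d : M, sat M (upd v x d) p
  | FEx x p => exists d : M, sat M (upd v x d) p
  end.

(* M |= p (for all assignments; for sentences this is the usual notion). *)
Definition models_form (M : structure) (p : form) : Prop :=
  forall v : nat -> M, sat M v p.

Definition theory := form -> Prop.

Definition models (M : structure) (T : theory) : Prop :=
  forall p, T p -> models_form M p.

Definition implies (T : theory) (p : form) : Prop :=
  forall M : structure, models M T -> models_form M p.

Definition finite_structure (M : structure) : Prop :=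
  exists l : list M, forall x : M, In x l.

Definition pseudofinite (T : theory) : Prop :=
  forall p, sentence p -> implies T p ->
    exists M : structure, finite_structure M /\ models_form M p.

Fixpoint bigAnd (l : list form) : form :=
  match l with [] => FTop | p :: l' => FAnd p (bigAnd l') end.
Fixpoint bigOr (l : list form) : form :=
  match l with [] => FBot | p :: l' => FOr p (bigOr l') end.
Definition allv (xs : list nat) (p : form) : form := fold_right FAll p xs.
Definition exv (xs : list nat) (p : form) : form := fold_right FEx p xs.

Fixpoint distinctF (xs : list nat) : form :=
  match xs with
  | [] => FTop
  | x :: xs' => FAnd (bigAnd (map (fun y => FNot (FEq x y)) xs')) (distinctF xs')
  end.

Fixpoint pathF (xs : list nat) : form :=
  match xs with
  | x :: ((y :: _) as t) => FAnd (FRel x y) (pathF t)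
  | _ => FTop
  end.

Definition irrefl_ax : form := FAll 0 (FNot (FRel 0 0)).
Definition symm_ax : form := FAll 0 (FAll 1 (FImp (FRel 0 1) (FRel 1 0))).

Definition tau (n : nat) : form :=
  let ys := seq 1 n in
  allv ys (FNot (FAnd (distinctF ys) (FAnd (pathF ys) (FRel n 1)))).

Definition sigma (n : nat) : form :=
  let ys := seq 1 n in
  FAll 0 (exv ys (FAnd (distinctF ys) (bigAnd (map (FRel 0) ys)))).

Definition degree_eq (r : nat) : form :=
  let ys := seq 1 r in
  let z := S r in
  FAll 0 (exv ys (FAnd (distinctF ys)
                 (FAnd (bigAnd (map (FRel 0) ys))
                       (FAll z (FImp (FRel 0 z) (bigOr (map (FEq z) ys))))))).

Definition T_r (r : nat) : theory := fun p =>
  p = irrefl_ax \/ p = symm_ax \/ (exists n, 3 <= n /\ p = tau n) \/ p = degree_eq r.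

Definition T_inf : theory := fun p =>
  p = irrefl_ax \/ p = symm_ax \/ (exists n, 3 <= n /\ p = tau n) \/
  (exists n, p = sigma n).

(* A sentence implied by T_r holds in every model of T_r, in particular in a
   nonprincipal ultraproduct of finite r-regular graphs whose girth tends to
   infinity: every axiom of T_r holds in all but finitely many factors, so the
   ultraproduct is a model by Łoś's theorem.  By Łoś's theorem again the
   sentence holds in some factor, which is finite.  Finite r-regular graphs of
   girth > g are Cayley graphs of r involutions acting on the reduced words of
   length at most g in the free product of r copies of Z/2: a cycle of length
   n <= g spells a reduced word of length n acting trivially, whereas such a
   word sends the empty word to itself.  For T_inf the same argument applies to
   g-regular graphs of girth > g. *)

From Stdlib Require Import List PeanoNat.
From mathcomp Require Import all_boot fingroup perm zify.
From mathcomp Require Import boolp classical_sets filter.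

Set Implicit Arguments.
Set Bullet Behavior "Strict Subproofs".
Unset Strict Implicit.
Unset Printing Implicit Defensive.

Local Open Scope classical_set_scope.

Lemma upd_eq (M : Type) (v : nat -> M) x d : upd v x d x = d.
Proof. by rewrite /upd; case: Nat.eq_dec. Qed.

Lemma upd_neq (M : Type) (v : nat -> M) x d y : y <> x -> upd v x d y = v y.
Proof. by rewrite /upd; case: Nat.eq_dec. Qed.

Lemma upd_agree (M : Type) (v w : nat -> M) x d l :
  (forall y, In y (remove Nat.eq_dec x l) -> v y = w y) ->
  forall y, In y l -> upd v x d y = upd w x d y.
Proof. by move=> vw y y_in; rewrite /upd; case: Nat.eq_dec => // yx; apply/vw/in_in_remove. Qed.

Lemma sat_coincidence (M : structure) p (v w : nat -> M) :
  (forall x, In x (fv p) -> v x = w x) -> sat M v p <-> sat M w p.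
Proof.
elim: p v w => [i j|i j||p IHp q IHq|p IHp q IHq|p IHp q IHq|x p IHp|x p IHp] v w /= vw.
- by rewrite !vw /=; auto.
- by rewrite !vw /=; auto.
- by [].
- by rewrite (IHp v w) ?(IHq v w) // => y y_in; apply/vw/in_or_app; auto.
- by rewrite (IHp v w) ?(IHq v w) // => y y_in; apply/vw/in_or_app; auto.
- by rewrite (IHp v w) ?(IHq v w) // => y y_in; apply/vw/in_or_app; auto.
- by split=> vp d; apply/(IHp _ _ (upd_agree d vw)).
- by split=> -[d dp]; exists d; apply/(IHp _ _ (upd_agree d vw)).
Qed.

Lemma sentence_models (M : structure) p v : sentence p -> sat M v p -> models_form M p.
Proof.
by move=> p_closed vp w; apply/(sat_coincidence (v := v)) => // x; rewrite p_closed.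
Qed.

Lemma NoDup_map_inj (X Y : Type) (f : X -> Y) l x y :
  NoDup (List.map f l) -> In x l -> In y l -> f x = f y -> x = y.
Proof.
elim: l => //= z l IH /NoDup_cons_iff [fz_nin nd].
have fz_neq u : In u l -> f z <> f u.
  by move=> ul fzu; apply: fz_nin; rewrite fzu; apply: in_map.
by case=> [<-|xl] [<-|yl] // fxy; [case: (fz_neq y)|case: (fz_neq x)|apply: IH].
Qed.

Lemma sat_allv (M : structure) xs p v : (forall w, sat M w p) -> sat M v (allv xs p).
Proof. by elim: xs v => //= x xs IH v p_valid d; apply: IH. Qed.

Lemma sat_exv (M : structure) xs p v w :
  (forall y, ~ In y xs -> w y = v y) -> sat M w p -> sat M v (exv xs p).
Proof.
elim: xs v => [|x xs IH] v /= wv wp; first by rewrite -(funext (fun y => wv y id)).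
exists (w x); apply: IH => // y y_nin; rewrite /upd; case: Nat.eq_dec => [->|yx] //.
by apply: wv => -[xy|//]; apply: yx.
Qed.

Lemma sat_bigAnd (M : structure) v l : sat M v (bigAnd l) <-> forall q, In q l -> sat M v q.
Proof.
elim: l => [|q l IH] /=; first by split=> // _ [].
rewrite IH; split=> [[vq vl] q' [<-|/vl]|vl] //.
by split=> [|q' ?]; apply: vl; auto.
Qed.

Lemma sat_bigOr (M : structure) v l q : In q l -> sat M v q -> sat M v (bigOr l).
Proof. by elim: l => //= q' l IH [<-|/IH]; auto. Qed.

Lemma sat_distinctF (M : structure) v xs : sat M v (distinctF xs) <-> NoDup (List.map v xs).
Proof.
elim: xs => [|x xs IH] /=; first by split=> // _; constructor.
rewrite sat_bigAnd IH NoDup_cons_iff; split=> -[neq nd]; split=> //.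
  move=> /in_map_iff [y [vyx y_in]]; apply: (neq (FNot (FEq x y))) => //=.
  exact: in_map.
move=> q /in_map_iff [y [<- y_in]] /= vxy; apply: neq.
by rewrite vxy; apply: in_map.
Qed.

Lemma sat_pathF_seq (M : structure) v a n k :
  sat M v (pathF (List.seq a n)) -> a <= k -> k.+1 < a + n -> rel M (v k) (v k.+1).
Proof.
elim: n a => [|[|n] IH] a; [lia|lia|].
move=> /= [va_rel vpath] ak kn; have [<-|ka] := eqVneq a k; first exact: va_rel.
by apply: (IH a.+1) => //; lia.
Qed.

Section Ultraproduct.
Variables (A : nat -> structure) (U : set_system nat).
Hypothesis U_ultra : UltraFilter U.

Lemma ultra_exists (S : forall n, A n -> Prop) :
  (exists D : forall n, A n, U [set n | S n (D n)]) <-> U [set n | exists d, S n d].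
Proof.
split=> [[D UD]|UexS]; first by apply: filterS UD => n; exists (D n).
have choose n : exists d : A n, (exists d, S n d) -> S n d.
  by case: (pselect (exists d, S n d)) => [[d Sd]|nS]; [exists d|exists (witness (A n))].
exists (fun n => sval (cid (choose n))).
by apply: filterS UexS => n /(svalP (cid (choose n))).
Qed.

Lemma ultra_forall (S : forall n, A n -> Prop) :
  (forall D : forall n, A n, U [set n | S n (D n)]) <-> U [set n | forall d, S n d].
Proof.
split=> [US|UallS D]; last by apply: filterS UallS => n; apply.
case: (in_ultra_setVsetC [set n | forall d, S n d] U_ultra) => // UnallS.
have [D UnSD] : exists D : forall n, A n, U [set n | ~ S n (D n)].
  by apply/(ultra_exists (fun n d => ~ S n d)); apply: filterS UnallS => n /existsNP.
by case: (filter_not_empty U); apply: filterS2 (US D) UnSD.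
Qed.

Definition ueq (x y : forall n, A n) : Prop := U [set n | x n = y n].

Lemma ueq_trans x y z : ueq x y -> ueq y z -> ueq x z.
Proof. by apply: filterS2 => n; apply: eq_trans. Qed.

Lemma ueq_sym x y : ueq x y -> ueq y x.
Proof. by apply: filterS => n; apply: esym. Qed.

Definition ultra_carrier := {c : set (forall n, A n) | exists x, c = ueq x}.

Definition uclass (x : forall n, A n) : ultra_carrier := exist _ (ueq x) (ex_intro _ x erefl).

Definition urep (c : ultra_carrier) : forall n, A n := sval (cid (svalP c)).

Lemma urepK c : uclass (urep c) = c.
Proof. by case: c => c c_class; apply: eq_exist; rewrite /urep /=; case: cid. Qed.

Lemma uclass_eq x y : uclass x = uclass y <-> ueq x y.
Proof.
split=> [/(congr1 sval) /= -> | xy]; first exact: filterE.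
apply: eq_exist; rewrite /= predeqE => z.
by split; [apply: ueq_trans; apply: ueq_sym | apply: ueq_trans].
Qed.

Lemma ueq_urep x : ueq (urep (uclass x)) x.
Proof. by apply/uclass_eq; rewrite urepK. Qed.

Definition ultraproduct : structure :=
  Structure ultra_carrier (uclass (fun n => witness (A n)))
    (fun a b => U [set n | rel (A n) (urep a n) (urep b n)]).

Lemma upd_uclass (w : nat -> forall n, A n) x (D : forall n, A n) :
  upd (fun y => uclass (w y)) x (uclass D) = (fun y => uclass (upd w x D y)).
Proof. by apply: funext => y; rewrite /upd; case: Nat.eq_dec. Qed.

Lemma upd_at (w : nat -> forall n, A n) x (D : forall n, A n) n :
  (fun y => upd w x D y n) = upd (fun y => w y n) x (D n).
Proof. by apply: funext => y; rewrite /upd; case: Nat.eq_dec. Qed.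

Theorem los p (w : nat -> forall n, A n) :
  sat ultraproduct (fun y => uclass (w y)) p <-> U [set n | sat (A n) (fun y => w y n) p].
Proof.
elim: p w => [i j|i j||p IHp q IHq|p IHp q IHq|p IHp q IHq|x p IHp|x p IHp] w /=.
- by split; apply: filterS2 (filterI (ueq_urep (w i)) (ueq_urep (w j))) => n /= [-> ->].
- exact: uclass_eq.
- by split=> //; apply: filter_not_empty.
- rewrite IHp IHq; split=> [Upq|Upq Up]; last by apply: filterS2 Upq Up => n pq /pq.
  case: (in_ultra_setVsetC [set n | sat (A n) (fun y => w y n) p] U_ultra) => [/Upq|].
    by apply: filterS => n qn _.
  by apply: filterS => n /= np /np.
- rewrite IHp IHq; split=> [[Up Uq]|Upq]; first exact: filterI.
  by split; apply: filterS Upq => n [].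
- rewrite IHp IHq; split=> [[Up|Uq]|Upq].
  + by apply: filterS Up => n; left.
  + by apply: filterS Uq => n; right.
  + case: (in_ultra_setVsetC [set n | sat (A n) (fun y => w y n) p] U_ultra) => [|Unp].
      by left.
    by right; apply: filterS2 Upq Unp => n [].
- have IHx D : sat ultraproduct (upd (fun y => uclass (w y)) x (uclass D)) p <->
      U [set n | sat (A n) (upd (fun y => w y n) x (D n)) p].
    by rewrite upd_uclass IHp; under eq_fun do rewrite upd_at.
  rewrite -(ultra_forall (fun n d => sat (A n) (upd (fun y => w y n) x d) p)).
  split=> H D; first exact/IHx.
  by rewrite -(urepK D); apply/IHx.
- have IHx D : sat ultraproduct (upd (fun y => uclass (w y)) x (uclass D)) p <->
      U [set n | sat (A n) (upd (fun y => w y n) x (D n)) p].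
    by rewrite upd_uclass IHp; under eq_fun do rewrite upd_at.
  rewrite -(ultra_exists (fun n d => sat (A n) (upd (fun y => w y n) x d) p)).
  split=> [[d]|[D /IHx]]; last by exists (uclass D).
  by rewrite -(urepK d) => /IHx; exists (urep d).
Qed.

Lemma models_ultraproduct p :
  U [set n | models_form (A n) p] -> models_form ultraproduct p.
Proof.
move=> Up v; have -> : v = (fun y => uclass (urep (v y))).
  by apply: funext => y; rewrite urepK.
by apply/los; apply: filterS Up => n; apply.
Qed.

Lemma ultraproduct_models_some p : models_form ultraproduct p -> exists n v, sat (A n) v p.
Proof.
move=> /(_ (fun=> uclass (fun n => witness (A n)))) /los /filter_ex [n np].
by exists n, (fun=> witness (A n)).
Qed.

End Ultraproduct.

Lemma pseudofinite_of_eventually_models (T : theory) (A : nat -> structure) :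
  (forall n, finite_structure (A n)) ->
  (forall p, T p -> \forall n \near \oo, models_form (A n) p) ->
  pseudofinite T.
Proof.
move=> A_fin A_T p p_sentence Tp.
have [U [U_ultra cofU]] := ultraFilterLemma eventually_filter.
have [|n [v Anp]] := ultraproduct_models_some (A := A) U_ultra (p := p).
  by apply: Tp => q /A_T /cofU; apply: models_ultraproduct.
by exists (A n); split; [|exact: sentence_models Anp].
Qed.

Definition simple_graph (G : structure) : Prop :=
  (forall x, ~ rel G x x) /\ (forall x y, rel G x y -> rel G y x).

Definition regular (G : structure) (r : nat) : Prop :=
  exists nb : G -> nat -> G,
    (forall x i j, i < r -> j < r -> nb x i = nb x j -> i = j) /\
    (forall x y, rel G x y <-> exists2 k, k < r & y = nb x k).

Definition has_cycle (G : structure) (n : nat) : Prop :=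
  exists y : nat -> G,
    [/\ forall i j, 0 < i <= n -> 0 < j <= n -> y i = y j -> i = j,
        forall k, 0 < k < n -> rel G (y k) (y k.+1) & rel G (y n) (y 1)].

Lemma models_irrefl_ax G : simple_graph G -> models_form G irrefl_ax.
Proof. by case=> irr _ v d /=; rewrite upd_eq; apply: irr. Qed.

Lemma models_symm_ax G : simple_graph G -> models_form G symm_ax.
Proof. by case=> _ sym v d e /=; rewrite upd_eq upd_neq // upd_eq; apply: sym. Qed.

Lemma models_tau G n : ~ has_cycle G n -> models_form G (tau n).
Proof.
move=> no_cycle v; apply: sat_allv => y /= [/sat_distinctF y_inj [y_path yn1]].
apply: no_cycle; exists y; split=> // [i j i_in j_in|k k_in].
  by apply: (NoDup_map_inj y_inj); apply/in_seq; lia.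
by apply: (sat_pathF_seq y_path); lia.
Qed.

Lemma regular_neighbours (G : structure) r m (v : nat -> G) d : regular G r -> m <= r ->
  exists w : nat -> G,
    [/\ w 0 = d, forall y, ~ In y (List.seq 1 m) -> w y = upd v 0 d y,
        NoDup (List.map w (List.seq 1 m)),
        forall y, In y (List.seq 1 m) -> rel G d (w y) &
        m = r -> forall e, rel G d e -> exists2 y, In y (List.seq 1 m) & e = w y].
Proof.
case=> nb [nb_inj rel_nb] mr.
exists (fun y => if y is k.+1 then if k < m then nb d k else v y else d); split=> //.
- case=> [|k] k_nin; rewrite ?upd_eq // upd_neq // ifN //.
  by apply/negP => km; apply: k_nin; apply/in_seq; lia.
- apply: NoDup_map_NoDup_ForallPairs; last exact: seq_NoDup.
  move=> [|i] [|j] /in_seq i_in /in_seq j_in; try lia.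
  by rewrite !ifT; [move/nb_inj => -> //|..]; lia.
- case=> [|k] /in_seq ?; first lia.
  by apply/rel_nb; exists k; rewrite ?ifT //; lia.
- move=> -> e /rel_nb [k kr ->]; exists k.+1; last by rewrite kr.
  by apply/in_seq; lia.
Qed.

Lemma models_sigma G r m : regular G r -> m <= r -> models_form G (sigma m).
Proof.
move=> G_reg mr v; rewrite /sigma /= => d.
have [w [w0 w_agree w_inj w_adj _]] := regular_neighbours v d G_reg mr.
apply: (sat_exv w_agree) => /=; split; first exact/sat_distinctF.
by apply/sat_bigAnd => q /in_map_iff [y [<- /w_adj]]; rewrite /= w0.
Qed.

Lemma models_degree_eq G r : regular G r -> models_form G (degree_eq r).
Proof.
move=> G_reg v; rewrite /degree_eq /= => d.
have [w [w0 w_agree w_inj w_adj w_all]] := regular_neighbours v d G_reg (leqnn r).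
apply: (sat_exv w_agree) => /=; split; [exact/sat_distinctF|split].
  by apply/sat_bigAnd => q /in_map_iff [y [<- /w_adj]]; rewrite /= w0.
move=> e; rewrite upd_eq upd_neq // w0 => /(w_all erefl) [y y_in ->].
apply: (sat_bigOr (q := FEq r.+1 y)); first exact: in_map.
by rewrite /= upd_eq upd_neq //; move/in_seq: y_in; lia.
Qed.

Lemma In_mem (T : eqType) (x : T) s : x \in s -> In x s.
Proof. by elim: s => //= y s IH; rewrite in_cons => /predU1P [->|/IH]; auto. Qed.

Section Cayley.
Import GroupScope.
Variables r g : nat.

Definition reduced (w : seq 'I_r) : bool := sorted (fun i j => i != j) w.

Lemma reduced_cons i w : reduced (i :: w) = (ohead w != Some i) && reduced w.
Proof. by case: w => //= j w; rewrite (inj_eq (@Some_inj _)) eq_sym. Qed.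

(* Left multiplication by the generator i, except that on the boundary of the
   ball, where i :: w would leave it, w is fixed: this keeps lmul i involutive. *)
Definition lmul (i : 'I_r) (w : seq 'I_r) : seq 'I_r :=
  if ohead w == Some i then behead w else if size w < g then i :: w else w.

Lemma size_lmul i w : size w <= g -> size (lmul i w) <= g.
Proof. by rewrite /lmul; case: ifP => _; [rewrite size_behead; lia|case: ifP]. Qed.

Lemma reduced_lmul i w : reduced w -> reduced (lmul i w).
Proof.
rewrite /lmul; case: ifP => [_|/negbT head_i w_red].
  by case: w => // j w; rewrite reduced_cons => /andP [].
by case: ifP => _ //; rewrite reduced_cons head_i.
Qed.

Lemma lmul_cons i w : lmul i (i :: w) = w.
Proof. by rewrite /lmul eqxx. Qed.

Lemma lmul_push i w : ohead w != Some i -> size w < g -> lmul i w = i :: w.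
Proof. by rewrite /lmul => /negbTE -> ->. Qed.

Lemma lmul_full i w : ohead w != Some i -> g <= size w -> lmul i w = w.
Proof. by rewrite /lmul leqNgt => /negbTE -> /negbTE ->. Qed.

Lemma lmulK i w : size w <= g -> reduced w -> lmul i (lmul i w) = w.
Proof.
move=> w_size w_red; have [head_i|head_i] := eqVneq (ohead w) (Some i).
  case: w head_i w_size w_red => // j w [->] w_size.
  by rewrite reduced_cons => /andP [head_w _]; rewrite lmul_cons lmul_push //; lia.
have [w_short|w_full] := ltnP (size w) g.
  by rewrite (lmul_push head_i w_short) lmul_cons.
by rewrite !(lmul_full head_i w_full).
Qed.

(* The ball of radius g in the free product of r copies of Z/2. *)
Definition ball := {w : g.-bseq 'I_r | reduced w}.

Definition lmul_ball (i : 'I_r) (x : ball) : ball :=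
  exist _ (Bseq (size_lmul i (size_bseq (val x)))) (reduced_lmul i (valP x)).

Lemma lmul_ballK i : involutive (lmul_ball i).
Proof. by move=> x; do 2 apply: val_inj; rewrite /= lmulK ?size_bseq ?(valP x). Qed.

Definition gen (i : 'I_r) : {perm ball} := perm (can_inj (lmul_ballK i)).

Lemma genE i x : val (val (gen i x)) = lmul i (val (val x)).
Proof. by rewrite permE. Qed.

Lemma genK i : gen i * gen i = 1.
Proof. by apply/permP => x; rewrite permM !permE lmul_ballK. Qed.

Definition word_perm (w : seq 'I_r) : {perm ball} := foldr (fun i p => p * gen i) 1 w.

Lemma word_permE w x : val (val (word_perm w x)) = foldr lmul (val (val x)) w.
Proof. by elim: w => [|i w IH] /=; rewrite ?perm1 // permM genE IH. Qed.

Definition empty_word : ball := exist _ [bseq] isT.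

Definition word_of (p : {perm ball}) : seq 'I_r := val (val (p empty_word)).

Lemma word_of1 : word_of 1 = [::].
Proof. by rewrite /word_of perm1. Qed.

Lemma word_of_word_perm w : size w <= g -> reduced w -> word_of (word_perm w) = w.
Proof.
rewrite /word_of word_permE; elim: w => // i w IH.
by rewrite reduced_cons /= => w_size /andP [head_i w_red]; rewrite IH ?lmul_push //; lia.
Qed.

Lemma word_of_gen i : 0 < g -> word_of (gen i) = [:: i].
Proof. by move=> g_gt0; rewrite /word_of genE /lmul /= g_gt0. Qed.

Definition cayley : structure :=
  Structure {perm ball} 1 (fun f h => exists i : 'I_r, h = f * gen i).

Lemma cayley_finite : finite_structure cayley.
Proof. by exists (enum {perm ball}) => x; apply: In_mem; rewrite mem_enum. Qed.

Lemma cayley_simple : 0 < g -> simple_graph cayley.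
Proof.
move=> g_gt0; split=> [f [i /eqP]|f h [i ->]]; last by exists i; rewrite -mulgA genK mulg1.
rewrite -{1}(mulg1 f) (inj_eq (mulgI f)) => /eqP /(congr1 word_of).
by rewrite word_of1 word_of_gen.
Qed.

Lemma cayley_regular : 0 < g -> regular cayley r.
Proof.
move=> g_gt0; exists (fun f k => f * oapp gen 1 (insub k)); split.
  move=> f i j ir jr; rewrite !insubT /= => /mulgI /(congr1 word_of).
  by rewrite !word_of_gen // => -[].
move=> f h; split=> [[i ->]|[k kr ->]]; last by exists (Ordinal kr); rewrite insubT.
by exists i => //; rewrite valK.
Qed.

Lemma walk_word (y : nat -> {perm ball}) m :
  (forall k, 0 < k < m -> exists i, y k.+1 = y k * gen i) ->
  (forall k, 0 < k -> k.+1 < m -> y k.+2 != y k) ->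
  0 < m -> exists w, [/\ size w = m.-1, reduced w & y m = y 1%N * word_perm w].
Proof.
move=> step nonback m_gt0.
suff walk k : k < m -> exists w,
    [/\ size w = k, reduced w, y k.+1 = y 1%N * word_perm w &
         forall i w', w = i :: w' -> y k.+1 = y k * gen i].
  by have [|w [? ? ym _]] := walk m.-1; [lia|exists w; rewrite prednK in ym].
elim: k => [|k IH] km; first by exists [::]; split=> //=; rewrite mulg1.
have [w [w_size w_red yk1 w_head]] := IH (ltnW km).
have [j yk2] := step k.+1 ltac:(lia).
exists (j :: w); split=> [|||_ _ [<- _]] //; first by rewrite /= w_size.
  rewrite reduced_cons w_red andbT.
  case: w w_head w_size {w_red yk1} => [|i w'] //= w_head w_size.
  apply: contraNneq (nonback k _ _) => [[ij]||]; [|lia|lia].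
  by rewrite yk2 (w_head i w' erefl) -mulgA ij genK mulg1.
by rewrite yk2 yk1 /= mulgA.
Qed.

Lemma cayley_no_cycle n : 3 <= n <= g -> ~ has_cycle cayley n.
Proof.
move=> n_bounds [y [y_inj y_step y_close]].
have y_neq i j : 0 < i <= n -> 0 < j <= n -> i != j -> y i != y j.
  by move=> ? ? ij; apply: contra_neq ij; apply: y_inj.
(* z closes the cycle into a walk z 1, ..., z n, z (n + 1) = z 1. *)
pose z (k : nat) := if k == n.+1 then y 1%N else y k.
have zE k : k <= n -> z k = y k by move=> kn; rewrite /z ifN //; lia.
have [||w [w_size w_red]] := walk_word (y := z) (m := n.+1) _ _ (ltn0Sn n).
- move=> k k_bounds; rewrite (zE k) /z; last by lia.
  have [->|kn] := eqVneq k n; first by rewrite eqxx; exact: y_close.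
  by rewrite ifN; [apply: y_step|]; lia.
- move=> k k_gt0 kn; rewrite (zE k) /z; last by lia.
  by case: ifP => [/eqP kn1|/negbT kn1]; apply: y_neq; lia.
- rewrite (zE 1%N) /z ?eqxx; last by lia.
  rewrite -{1}(mulg1 (y 1%N)) => /mulgI /(congr1 word_of).
  rewrite word_of1 word_of_word_perm //; last by lia.
  by move=> w_nil; move: w_size; rewrite -w_nil /=; lia.
Qed.

End Cayley.

Lemma eventually_models_tau (r : nat -> nat) n : 3 <= n ->
  \forall g \near \oo, models_form (cayley (r g) g.+1) (tau n).
Proof. by move=> n3; exists n => // g /= ng; apply/models_tau/cayley_no_cycle; lia. Qed.

Lemma T_r_eventually_cayley r p :
  T_r r p -> \forall g \near \oo, models_form (cayley r g.+1) p.
Proof.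
case=> [->|[->|[[n [/leP n3 ->]]|->]]].
- by apply: nearW => g; apply/models_irrefl_ax/cayley_simple.
- by apply: nearW => g; apply/models_symm_ax/cayley_simple.
- exact: (eventually_models_tau (fun=> r)).
- by apply: nearW => g; apply/models_degree_eq/cayley_regular.
Qed.

Lemma T_inf_eventually_cayley p :
  T_inf p -> \forall g \near \oo, models_form (cayley g g.+1) p.
Proof.
case=> [->|[->|[[n [/leP n3 ->]]|[n ->]]]].
- by apply: nearW => g; apply/models_irrefl_ax/cayley_simple.
- by apply: nearW => g; apply/models_symm_ax/cayley_simple.
- exact: (eventually_models_tau id).
- by exists n => // g /= ng; apply: (models_sigma (cayley_regular _ _)).
Qed.

Theorem theorem4p5 : (forall r : nat, pseudofinite (T_r r)) /\ pseudofinite T_inf.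
Proof.
split=> [r|].
- exact: pseudofinite_of_eventually_models (fun g => cayley_finite r g.+1)
           (@T_r_eventually_cayley r).
- exact: pseudofinite_of_eventually_models (fun g => cayley_finite g g.+1)
           T_inf_eventually_cayley.
Qed.
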